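(* Let $G$ be an abelian profinite-$C$ group. Then the following are equivalent: (i) $G$ is a $C$-group; (ii) $G$ is a torsion group; (iii) $G$ has squarefree finite exponent.
   Context: A permutable complement of a subgroup $H$ of a group $G$ is a subgroup $K$ with $G=HK$ and $H\cap K=1$. A group is a $C$-group if every subgroup has a permutable complement. A profinite group $G$ is a profinite-$C$ group if every closed subgroup of $G$ has a closed permutable complement in $G$. *)

(* Abelian groups are written additively:
   an abelian topological group is a [topologicalZmodType] (tvs.v). *)
From HB Require Import structures.
From mathcomp Require Import all_boot all_order all_algebra.
From mathcomp Require Import boolp classical_sets topology tvs.
Set Implicit Arguments. Unset Strict Implicit. Unset Printing Implicit Defensive.
Import GRing.Theory.
Local Open Scope classical_set_scope.
Local Open Scope ring_scope.

Definition is_subgroup (G : zmodType) (H : set G) : Prop :=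
  H 0 /\ (forall x y, H x -> H y -> H (x - y)).

Definition permutable_complement (G : zmodType) (H K : set G) : Prop :=
  is_subgroup K /\
  (forall g : G, exists h k, H h /\ K k /\ g = h + k) /\
  (forall x : G, H x -> K x -> x = 0).

Definition C_group (G : zmodType) : Prop :=
  forall H : set G, is_subgroup H -> exists K : set G, permutable_complement H K.

Definition profinite (G : topologicalZmodType) : Prop :=
  compact [set: G] /\ hausdorff_space G /\ totally_disconnected [set: G].

Definition profinite_C_group (G : topologicalZmodType) : Prop :=
  profinite G /\
  forall H : set G, is_subgroup H -> closed H ->
    exists K : set G, closed K /\ permutable_complement H K.

Definition torsion_group (G : zmodType) : Prop :=
  forall x : G, exists n : nat, (0 < n)%N /\ x *+ n = 0.

Definition squarefree (n : nat) : Prop :=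
  forall p : nat, prime p -> ~~ (p * p %| n)%N.

Definition is_exponent (G : zmodType) (e : nat) : Prop :=
  (0 < e)%N /\ (forall x : G, x *+ e = 0) /\
  (forall n : nat, (0 < n)%N -> (forall x : G, x *+ n = 0) -> (e <= n)%N).

Definition squarefree_finite_exponent (G : zmodType) : Prop :=
  exists e : nat, is_exponent G e /\ squarefree e.

From HB Require Import structures.
From mathcomp Require Import all_boot all_order all_algebra finmap.
From mathcomp Require Import boolp classical_sets cardinality topology tvs.
Set Implicit Arguments. Unset Strict Implicit. Unset Printing Implicit Defensive.
Import GRing.Theory.
Local Open Scope classical_set_scope.
Local Open Scope ring_scope.

(* A cyclic subgroup <x> with a permutable complement contains no nonzero x
   that is both divisible by n and killed by n.  In a torsion profinite-C group
   every <x> is finite, hence closed, hence complemented; this makes the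
   exponent squarefree (if p^2 | e then x (e/p) is p-divisible and p-torsion),
   and a compactness argument shows that the exponent is finite.
   Conversely, in a group of squarefree exponent a subgroup A maximal for
   A ∩ H = 0 satisfies H + A = G, since otherwise an element of prime order
   outside H + A could be adjoined to A.
   Finally, in a C-group the decompositions G = nG + G[n] make a complement K
   of the torsion subgroup divisible; the closure of K is then a compact
   divisible subgroup, hence connected, hence trivial when G is totally
   disconnected. *)

Section Subgroups.
Variable G : zmodType.
Implicit Types (H K M : set G) (x y : G).

Lemma subgroup0 H : is_subgroup H -> H 0.
Proof. by case. Qed.

Lemma subgroupB H x y : is_subgroup H -> H x -> H y -> H (x - y).
Proof. by case=> _; apply. Qed.

Lemma subgroupN H x : is_subgroup H -> H x -> H (- x).
Proof. by move=> sH Hx; rewrite -sub0r; apply: subgroupB => //; exact: subgroup0. Qed.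

Lemma subgroupD H x y : is_subgroup H -> H x -> H y -> H (x + y).
Proof. by move=> sH Hx Hy; rewrite -[y]opprK; apply: subgroupB => //; exact: subgroupN. Qed.

Lemma subgroupMn H x n : is_subgroup H -> H x -> H (x *+ n).
Proof.
move=> sH Hx; elim: n => [|n IHn]; first by rewrite mulr0n; exact: subgroup0.
by rewrite mulrS; exact: subgroupD.
Qed.

Lemma subgroup_coprime H x p q : is_subgroup H -> (0 < p)%N -> coprime p q ->
  H (x *+ p) -> H (x *+ q) -> H x.
Proof.
move=> sH p_gt0 /eqP cpq Hxp Hxq; have [a _ /dvdnP [c]] := Bezoutl q p_gt0.
rewrite cpq => def1.
have -> : x = (x *+ p) *+ c - (x *+ q) *+ a.
  by rewrite -!mulrnA (mulnC p) -def1 mulrnDr mulr1n (mulnC q) addrK.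
by apply: subgroupB => //; exact: subgroupMn.
Qed.

Definition mulrn_image n : set G := [set x *+ n | x in [set: G]].

Lemma subgroup_mulrn_image n : is_subgroup (mulrn_image n).
Proof.
split; first by exists 0; rewrite ?mul0rn.
by move=> _ _ [a _ <-] [b _ <-]; exists (a - b); rewrite ?mulrnBl.
Qed.

Definition zmultiples x : set G := [set x *~ z | z in [set: int]].

Lemma subgroup_zmultiples x : is_subgroup (zmultiples x).
Proof.
split; first by exists 0; rewrite ?mulr0z.
by move=> _ _ [a _ <-] [b _ <-]; exists (a - b); rewrite ?mulrzBr.
Qed.

Lemma zmultiples_torsion x m : (0 < m)%N -> x *+ m = 0 ->
  zmultiples x = [set x *+ k | k in `I_m].
Proof.
move=> m_gt0 xm0; apply/seteqP; split => _ [z _ <-]; last by exists z%:Z.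
have m_neq0 : m%:Z != 0 by rewrite eqz_nat -lt0n.
have r_ge0 : 0 <= (z %% m)%Z by rewrite modz_ge0.
exists `|(z %% m)%Z|%N; first by rewrite /= -ltz_nat gez0_abs ?ltz_pmod.
have xqm0 : x *~ ((z %/ m)%Z * m) = 0.
  by rewrite mulrC mulrzA -(natz m) mulrz_nat xm0 mul0rz.
rewrite [in RHS](divz_eq z m) mulrzDr xqm0 add0r.
by rewrite -mulrz_nat natz gez0_abs.
Qed.

Lemma complement_mulrn_image_decomp n :
  (exists K, permutable_complement (mulrn_image n) K) ->
  forall g : G, exists w l : G, g = w *+ n + l /\ l *+ n = 0.
Proof.
case=> K [sK [cover meet0]] g; have [_ [k [[w _ <-] [Kk ->]]]] := cover g.
by exists w, k; split=> //; apply: meet0; [exists k | exact: subgroupMn].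
Qed.

Lemma complement_zmultiples_eq0 x y n :
  (exists K, permutable_complement (zmultiples x) K) ->
  x = y *+ n -> x *+ n = 0 -> x = 0.
Proof.
case=> K [sK [cover meet0]] def_x xn0; have [_ [k [[z _ <-] [Kk def_y]]]] := cover y.
apply: meet0; first by exists 1; rewrite ?mulr1z.
suff -> : x = k *+ n by exact: subgroupMn.
have xzn0 : (x *~ z) *+ n = 0.
  by rewrite -mulrz_nat -mulrzA mulrC mulrzA mulrz_nat xn0 mul0rz.
by rewrite {1}def_x def_y mulrnDl xzn0 add0r.
Qed.

Lemma subgroup_sumset H K : is_subgroup H -> is_subgroup K ->
  is_subgroup [set h + k | h in H & k in K].
Proof.
move=> sH sK; split.
  by exists 0; [exact: subgroup0 | exists 0; rewrite ?addr0 //; exact: subgroup0].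
move=> _ _ [h1 H1 [k1 K1 <-]] [h2 H2 [k2 K2 <-]].
exists (h1 - h2); first exact: subgroupB.
by exists (k1 - k2); [exact: subgroupB | rewrite opprD addrACA].
Qed.

Lemma complement_mulrn_image_witness n (g : G) :
  (exists K, permutable_complement (mulrn_image n) K) -> g *+ n != 0 ->
  exists w : G, w *+ n *+ n != 0.
Proof.
move=> /complement_mulrn_image_decomp/(_ g) [w [l [-> ln0]]].
by rewrite mulrnDl ln0 addr0 => wnn; exists w.
Qed.

Definition torsion_elements : set G := [set t | exists n, (0 < n)%N /\ t *+ n = 0].

Lemma subgroup_torsion_elements : is_subgroup torsion_elements.
Proof.
split; first by exists 1%N; rewrite mul0rn.
move=> a b [n [n_gt0 an0]] [m [m_gt0 bm0]]; exists (n * m)%N.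
by rewrite muln_gt0 n_gt0 m_gt0 mulrnBl mulrnA an0 mul0rn mulnC mulrnA bm0 mul0rn subr0.
Qed.

Lemma C_group_torsion_complement_divisible K : C_group G ->
  permutable_complement torsion_elements K ->
  forall k n, K k -> (0 < n)%N -> exists2 a, K a & a *+ n = k.
Proof.
move=> CG [sK [cover meet0]] k n Kk n_gt0.
have [w [l [def_k ln0]]] := complement_mulrn_image_decomp (CG _ (subgroup_mulrn_image n)) k.
have [t [a [Tt [Ka def_w]]]] := cover w.
exists a => //; apply/eqP; rewrite -subr_eq0; apply/eqP; apply: meet0.
  have -> : a *+ n - k = - (t *+ n + l).
    by rewrite def_k def_w mulrnDl addrAC [_ + a *+ n]addrC opprD addrA subrr add0r.
  apply: subgroupN subgroup_torsion_elements _; apply: subgroupD subgroup_torsion_elements _ _.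
    exact: subgroupMn subgroup_torsion_elements _.
  by exists n.
by apply: subgroupB => //; exact: subgroupMn.
Qed.

End Subgroups.

Section SquarefreeExponent.
Variable G : zmodType.
Implicit Types (H M A : set G) (x y g : G).

Lemma prime_order_zmultiples_meet M x p z : is_subgroup M -> prime p ->
  x *+ p = 0 -> ~ M x -> M (x *~ z) -> x *~ z = 0.
Proof.
move=> sM p_pr xp0 Mx'; have p_gt0 := prime_gt0 p_pr.
have : zmultiples x (x *~ z) by exists z.
rewrite (zmultiples_torsion p_gt0 xp0) => -[k /= k_lt_p <-].
have [-> // | k_gt0 Mxk] := posnP k; rewrite ?mulr0n //.
case: Mx'; apply: (@subgroup_coprime _ _ _ p k) => //; last by rewrite xp0; exact: subgroup0.
by rewrite prime_coprime // gtnNdvd.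
Qed.

Lemma subgroup_prime_step M g e : is_subgroup M -> ~ M g ->
  (0 < e)%N -> M (g *+ e) -> exists p g', [/\ prime p, ~ M g' & M (g' *+ p)].
Proof.
move=> sM Mg' e_gt0 Mge.
have exP : exists n, (0 < n)%N && `[< M (g *+ n) >] by exists e; rewrite e_gt0 asboolT.
case: (ex_minnP exP) => n /andP [n_gt0 /asboolP Mgn] n_min.
have n_gt1 : (1 < n)%N.
  by rewrite ltn_neqAle n_gt0 andbT; apply/eqP => n1; move: Mgn; rewrite -n1 mulr1n.
have p_pr : prime (pdiv n) by exact: pdiv_prime.
have p_dvd_n : (pdiv n %| n)%N by exact: pdiv_dvd.
exists (pdiv n), (g *+ (n %/ pdiv n)); split => //; last by rewrite -mulrnA divnK.
move=> Mgq.
have q_gt0 : (0 < n %/ pdiv n)%N by rewrite divn_gt0 ?prime_gt0 // dvdn_leq.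
have /n_min : (0 < n %/ pdiv n)%N && `[< M (g *+ (n %/ pdiv n)) >] by rewrite q_gt0 asboolT.
by rewrite leqNgt ltn_Pdiv ?prime_gt1.
Qed.

Lemma squarefree_exponent_prime_outside M g e : is_subgroup M -> ~ M g ->
  (0 < e)%N -> squarefree e -> (forall x, x *+ e = 0) ->
  exists p x, [/\ prime p, x *+ p = 0 & ~ M x].
Proof.
move=> sM Mg' e_gt0 sqf_e eG.
have [|p [g' [p_pr Mg'' Mg'p]]] := subgroup_prime_step sM Mg' e_gt0.
  by rewrite eG; exact: subgroup0.
have p_gt0 := prime_gt0 p_pr.
have p_dvd_e : (p %| e)%N.
  apply: contra_notT Mg''; rewrite -prime_coprime // => cop.
  by apply: (subgroup_coprime sM p_gt0 cop) => //; rewrite eG; exact: subgroup0.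
have def_e : e = (e %/ p * p)%N by rewrite divnK.
have cop : coprime p (e %/ p).
  rewrite prime_coprime //; apply/negP => /dvdnP [c def_q].
  by have /negP := sqf_e p p_pr; apply; rewrite def_e def_q -mulnA dvdn_mull.
exists p, (g' *+ (e %/ p)); split => //; first by rewrite -mulrnA -def_e eG.
by move=> Mg'q; exact/Mg''/(subgroup_coprime sM p_gt0 cop).
Qed.

Lemma exists_maximal_trivial_meet H : exists A, [/\ is_subgroup A,
  forall x, H x -> A x -> x = 0 &
  forall B, A `<` B -> is_subgroup B -> ~ (forall x, H x -> B x -> x = 0)].
Proof.
(* 0 is left out of P: the union of the empty chain must satisfy P. *)
pose P K := (forall x y, K x -> K y -> K (x - y)) /\ (forall x, H x -> K x -> x = 0).
have [A [[AB Ameet] Amax]] : exists A, P A /\ forall B, A `<` B -> ~ P B.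
  apply: Zorn_bigcup => F FP Ftot; split; last first.
    by move=> x Hx [X FX Xx]; exact: (proj2 (FP _ FX)).
  move=> x y [X FX Xx] [Y FY Yy].
  have [XY|YX] := Ftot _ _ FX FY.
    by exists Y => //; apply: (proj1 (FP _ FY)) => //; exact: XY.
  by exists X => //; apply: (proj1 (FP _ FX)) => //; exact: YX.
have A0 : A 0.
  apply: contrapT => A0'; apply: (Amax [set 0]).
    by split=> [x Ax|/(_ 0 erefl)//]; case: A0'; rewrite -(subrr x); exact: AB.
  by split=> [x y -> ->|x _ ->]; rewrite ?subrr.
exists A; split => // B ltAB sB Bmeet; apply: (Amax B ltAB); split => //.
exact: (proj2 sB).
Qed.

Lemma C_group_of_squarefree_exponent : squarefree_finite_exponent G -> C_group G.
Proof.
move=> [e [[e_gt0 [eG _]] sqf_e]] H sH.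
have [A [sA Ameet Amax]] := exists_maximal_trivial_meet H.
exists A; split => //; split => //.
pose M := [set h + k | h in H & k in A].
have sM : is_subgroup M := subgroup_sumset sH sA.
move=> g; apply: contrapT => noDecomp.
have Mg' : ~ M g by move=> [h Hh [k Ak gE]]; apply: noDecomp; exists h, k.
have [p [x [p_pr xp0 Mx']]] := squarefree_exponent_prime_outside sM Mg' e_gt0 sqf_e eG.
have AM : A `<=` M by move=> k Ak; exists 0; [exact: subgroup0 | exists k; rewrite ?add0r].
apply: (Amax [set k + y | k in A & y in zmultiples x]).
- have Zx0 := subgroup0 (subgroup_zmultiples x).
  split=> [k Ak|AxA]; first by exists k => //; exists 0; rewrite ?addr0.
  apply/Mx'/AM/AxA; exists 0; first exact: subgroup0.
  by exists x; rewrite ?add0r //; exists 1; rewrite ?mulr1z.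
- exact: subgroup_sumset (subgroup_zmultiples x).
- move=> h Hh [k Ak [_ [z _ <-] hE]].
  have Mxz : M (x *~ z).
    by exists h => //; exists (- k); [exact: subgroupN | rewrite -hE addrAC subrr add0r].
  move: hE Hh; rewrite (prime_order_zmultiples_meet sM p_pr xp0 Mx' Mxz) addr0 => <- Hk.
  exact: Ameet.
Qed.

End SquarefreeExponent.

Lemma cluster_sub_closed {T : topologicalType} (F : set_system T) (A : set T) :
  F A -> closed A -> cluster F `<=` A.
Proof. by move=> FA cA p clFp; apply: cA => W Wp; exact: clFp FA Wp. Qed.

Lemma closed_image_compact {T U : topologicalType} (f : T -> U) (A : set T) :
  hausdorff_space U -> compact A -> continuous f -> closed (f @` A).
Proof.
move=> hU cA cf; apply: compact_closed => //; apply: continuous_compact => //.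
exact: continuous_subspaceT.
Qed.

Section TopologicalZmodule.
Variable G : topologicalZmodType.
Implicit Types (B K N O Y : set G) (x y : G).

Lemma continuous_addf (T : topologicalType) (f g : T -> G) :
  continuous f -> continuous g -> continuous (fun t => f t + g t).
Proof.
move=> cf cg t.
apply: (@continuous_comp _ _ _ (fun t => (f t, g t)) (fun z : G * G => z.1 + z.2)).
  by apply: cvg_pair; [exact: cf | exact: cg].
exact: add_continuous.
Qed.

Lemma continuous_mulrn n : continuous (fun x : G => x *+ n).
Proof.
elim: n => [|n IHn].
  rewrite (_ : (fun x => x *+ 0) = fun=> 0); first exact: cst_continuous.
  by apply/funext => x; rewrite mulr0n.
rewrite (_ : (fun x => x *+ n.+1) = fun x => x + x *+ n); last by apply/funext => x; rewrite mulrS.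
by apply: continuous_addf => // x; exact: cvg_id.
Qed.

Lemma nbhs0_sub N : nbhs (0 : G) N ->
  exists2 N', nbhs (0 : G) N' & forall u v, N' u -> N' v -> N (u - v).
Proof.
move=> N0; have : nbhs ((0 : G) - 0) N by rewrite subr0.
move=> /(@sub_continuous G (0, 0)) [[U V] /= [U0 V0] UV].
exists (U `&` V); first exact: filterI.
by move=> u v [Uu _] [_ Vv]; exact: (UV (u, v)).
Qed.

Lemma closure_subgroup K : is_subgroup K -> is_subgroup (closure K).
Proof.
move=> sK; split; first by apply: subset_closure; exact: subgroup0.
move=> x y Kx Ky W /(@sub_continuous G (x, y)) [[U V] /= [Ux Vy] UV].
have [a [Ka Ua]] := Kx U Ux; have [b [Kb Vb]] := Ky V Vy.
by exists (a - b); split; [exact: subgroupB | exact: (UV (a, b))].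
Qed.

Lemma compact_translate_nbhs B O : compact B -> open O -> B `<=` O ->
  exists2 N, nbhs (0 : G) N & forall a n, B a -> N n -> O (a + n).
Proof.
move=> cB oO BO.
have : \forall n \near nbhs (0 : G), B `<=` (fun a => O (a + n)).
  apply: (proj1 (compact_near_coveringP B) cB G (nbhs (0 : G)) (fun n a => O (a + n)) _) => a Ba.
  have Oa : nbhs (a + 0) O by rewrite addr0; apply: open_nbhs_nbhs; split => //; exact: BO.
  exact: (@add_continuous G (a, 0) O Oa).
by move=> N; exists (fun n => B `<=` (fun a => O (a + n))) => // a n Ba; apply.
Qed.

(* compact_cover is only stated for pointed spaces. *)
#[local, non_forgetful_inheritance]
HB.instance Definition _ := isPointed.Build G 0.

(* Pigeonhole: two of x, 2x, ..., (r+1)x lie in the same translate of N'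
   from a finite cover of Y by r translates. *)
Lemma compact_subgroup_small_multiple Y N : compact Y -> is_subgroup Y ->
  nbhs (0 : G) N -> exists r, forall x, Y x -> exists2 j, (0 < j <= r)%N & N (x *+ j).
Proof.
move=> cY sY N0.
have [N2 N20 N2sub] := nbhs0_sub N0.
have [N' [oN' N'0] N'N2] : exists2 N', open_nbhs (0 : G) N' & N' `<=` N2.
  by move: N20; rewrite nbhsE.
pose f c := [set z : G | N' (z - c)].
have open_f c : open (f c).
  have : continuous (fun z : G => z - c).
    by apply: continuous_addf => // z; [exact: cvg_id | exact: cvg_cst].
  by move/continuousP; apply.
have Ycov : Y `<=` cover Y f by move=> y Yy; exists y => //; rewrite /f /= subrr.
have coverY : cover_compact Y by rewrite -compact_cover.
have [D DY YD] := coverY G Y f (fun c _ => open_f c) Ycov.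
exists #|{: D}| => x Yx.
have ex_c (k : 'I_#|{: D}|.+1) : exists c : D, N' (x *+ k - val c).
  by have [c Dc fc] := YD _ (subgroupMn k sY Yx); exists [` Dc]%fset.
have [h hP] := choice ex_c.
have [k1 [k2 [hk k1k2]]] : exists k1 k2, h k1 = h k2 /\ (k1 < k2)%N.
  apply: contrapT => hinj; suff /leq_card : injective h by rewrite card_ord ltnn.
  move=> k1 k2 hk; apply: val_inj; case: (ltngtP k1 k2) => // lt; case: hinj.
    by exists k1, k2.
  by exists k2, k1.
exists (k2 - k1)%N.
  by rewrite subn_gt0 k1k2 /= (leq_trans (leq_subr _ _)) // -ltnS.
rewrite mulrnBr ?(ltnW k1k2) //.
have := N2sub _ _ (N'N2 _ (hP k2)) (N'N2 _ (hP k1)).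
by rewrite hk opprB addrA subrK.
Qed.

(* B is a relatively clopen part of Y containing b.  Every y in Y is
   b + r! x with x in Y, and is reached from b by steps j x in N, which never
   leave B. *)
Lemma connected_divisible_compact_subgroup Y : compact Y -> is_subgroup Y ->
  (forall y n, Y y -> (0 < n)%N -> exists2 x, Y x & x *+ n = y) -> connected Y.
Proof.
move=> cY sY divY B [b Bb] [O oO defB] [C cC defB'].
have BY : B `<=` Y by rewrite defB => z [].
have BO : B `<=` O by rewrite defB => z [].
have cB : compact B by rewrite defB'; exact: compact_closedI.
have [N N0 BNO] := compact_translate_nbhs cB oO BO.
have stepB a c m : B a -> Y c -> N c -> B (a + c *+ m).
  move=> Ba Yc Nc; elim: m => [|m IHm]; first by rewrite mulr0n addr0.
  rewrite mulrSr addrA defB; split; last exact: BNO.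
  by apply: subgroupD => //; exact: BY.
have [r small] := compact_subgroup_small_multiple cY sY N0.
apply/seteqP; split => // y Yy.
have [x Yx def_yb] := divY _ r`! (subgroupB sY Yy (BY _ Bb)) (fact_gt0 r).
have [j /andP [j_gt0 j_le_r] Nxj] := small x Yx.
have /dvdnP [t def_r] : (j %| r`!)%N by apply: dvdn_fact; rewrite j_gt0 j_le_r.
have := stepB b (x *+ j) t Bb (subgroupMn j sY Yx) Nxj.
by rewrite -mulrnA mulnC -def_r def_yb addrC subrK.
Qed.

End TopologicalZmodule.

Section CompactGroup.
Variable G : topologicalZmodType.
Hypothesis hG : hausdorff_space G.
Hypothesis cG : compact [set: G].
Implicit Types (K : set G) (x y : G).

Lemma closed_mulrn_image n : closed (@mulrn_image G n).
Proof. exact: closed_image_compact (@continuous_mulrn G n). Qed.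

Lemma closed_coset_mulrn_image a n : closed [set a + w *+ n | w in [set: G]].
Proof.
apply: closed_image_compact => //; apply: continuous_addf (@continuous_mulrn G n).
exact: cst_continuous.
Qed.

Lemma closure_divisible K : is_subgroup K ->
  (forall k n, K k -> (0 < n)%N -> exists2 a, K a & a *+ n = k) ->
  forall y n, closure K y -> (0 < n)%N -> exists2 x, closure K x & x *+ n = y.
Proof.
move=> sK divK y n Ky n_gt0.
have cKn : closed [set x *+ n | x in closure K].
  apply: closed_image_compact (@continuous_mulrn G n) => //.
  by rewrite -[closure K]setTI; apply: compact_closedI => //; exact: closed_closure.
suff : closure K `<=` [set x *+ n | x in closure K] by move/(_ y Ky) => [x Kx <-]; exists x.
move=> z Kz; apply: cKn; apply: closure_subset Kz => k Kk.
by have [a Ka <-] := divK k n Kk n_gt0; exists a => //; exact: subset_closure.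
Qed.

Lemma torsion_of_C_group : totally_disconnected [set: G] -> C_group G -> torsion_group G.
Proof.
move=> td CG x.
have [K cK] := CG _ (subgroup_torsion_elements G); have [sK [cover _]] := cK.
have cY : compact (closure K).
  by rewrite -[closure K]setTI; apply: compact_closedI => //; exact: closed_closure.
have connY : connected (closure K).
  apply: connected_divisible_compact_subgroup cY (closure_subgroup sK) _.
  exact: closure_divisible (C_group_torsion_complement_divisible CG cK).
have K0 k : K k -> k = 0.
  move=> Kk; suff : connected_component [set: G] 0 k by rewrite td.
  exists (closure K); last exact: subset_closure.
  by split=> //; apply: subset_closure; exact: subgroup0.
by have [t [k [Tt [Kk ->]]]] := cover x; rewrite (K0 k Kk) addr0.
Qed.

End CompactGroup.

Section Moduli.
Variable o : nat -> nat.
Hypothesis o_gt0 : forall n, (0 < o n)%N.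

Fixpoint moduli k : nat :=
  if k is k'.+1 then (moduli k' * o (moduli k') * k)%N else 1%N.

Lemma moduli_gt0 k : (0 < moduli k)%N.
Proof. by elim: k => //= k IHk; rewrite !muln_gt0 IHk o_gt0. Qed.

Lemma moduli_dvd k j : (k <= j)%N -> (moduli k %| moduli j)%N.
Proof.
move=> /subnK <-; elim: (j - k)%N => // d IHd.
by rewrite addSn /= -mulnA dvdn_mulr.
Qed.

Lemma dvdn_o_moduliS k : (o (moduli k) %| moduli k.+1)%N.
Proof. by rewrite /= dvdn_mulr ?dvdn_mull. Qed.

Lemma dvdn_moduliS k : (k.+1 %| moduli k.+1)%N.
Proof. exact: dvdn_mull. Qed.

End Moduli.

Section ModuliSums.
Variables (G : zmodType) (b : nat -> G) (o : nat -> nat).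
Hypothesis b_o : forall n, b n *+ o n = 0.
Hypothesis b_mulrn : forall n, exists w, b n = w *+ n.

Definition moduli_sum k : G := \sum_(i < k) b (moduli o i).

Lemma moduli_sumS k : moduli_sum k.+1 = moduli_sum k + b (moduli o k).
Proof. by rewrite /moduli_sum big_ord_recr. Qed.

Lemma moduli_sum_mulrn k : moduli_sum k *+ moduli o k = 0.
Proof.
elim: k => [|k IHk]; first by rewrite /moduli_sum big_ord0 mul0rn.
rewrite moduli_sumS mulrnDl /= !mulrnA IHk [b _ *+ _ *+ _]mulrnAC b_o.
by rewrite !mul0rn addr0.
Qed.

Lemma moduli_sum_tail k j : (k <= j)%N ->
  exists w, moduli_sum j = moduli_sum k + w *+ moduli o k.
Proof.
move=> /subnK <-; elim: (j - k)%N => [|d [w IHd]]; first by exists 0; rewrite mul0rn addr0.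
have [v def_b] := b_mulrn (moduli o (d + k)).
have /dvdnP [c def_N] := moduli_dvd o (leq_addl d k).
exists (w + v *+ c); rewrite addSn moduli_sumS IHd def_b def_N.
by rewrite mulrnDl -addrA (mulnC c) mulrnA mulrnAC.
Qed.

End ModuliSums.

Section TorsionWithClosedComplements.
Variable G : topologicalZmodType.
Hypothesis hG : hausdorff_space G.
Hypothesis cG : compact [set: G].
Hypothesis closed_complement : forall H : set G, is_subgroup H -> closed H ->
  exists K, permutable_complement H K.
Hypothesis tor : torsion_group G.
Implicit Types (x y : G).

Lemma closed_zmultiples x : closed (zmultiples x).
Proof.
have [m [m_gt0 xm0]] := tor x; rewrite (zmultiples_torsion m_gt0 xm0).
by apply: compact_closed => //; apply/finite_compact/finite_image/finite_II.
Qed.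

Lemma divisible_torsion_eq0 x y n : x = y *+ n -> x *+ n = 0 -> x = 0.
Proof.
apply: complement_zmultiples_eq0; apply: closed_complement; first exact: subgroup_zmultiples.
exact: closed_zmultiples.
Qed.

(* If no n kills G, pick b_n in nG with n b_n <> 0 and let
   y_k = b_(N_0) + ... + b_(N_(k-1)), where N_(k+1) = N_k ord(b_(N_k)) (k+1).
   A cluster point z of (y_k) lies in every coset y_k + N_k G.  Once ord z
   divides N_k, divisible_torsion_eq0 forces z = y_(k+1), whence
   N_k b_(N_k) = N_k z = 0. *)
Lemma exists_annihilator : exists2 n, (0 < n)%N & forall x, x *+ n = 0.
Proof.
apply: contrapT => noAnn.
have witness n : exists w : G, (0 < n)%N -> w *+ n *+ n != 0.
  have [->|n_gt0] := posnP n; first by exists 0.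
  have [g gn] : exists g : G, g *+ n != 0.
    apply: contrapT => all0; apply: noAnn; exists n => // x.
    by apply/eqP; apply: contrapT => /negP xn; apply: all0; exists x.
  have cGn := closed_complement (subgroup_mulrn_image G n) (@closed_mulrn_image _ hG cG n).
  by have [v vn] := complement_mulrn_image_witness cGn gn; exists v.
have [w wP] := choice witness.
have [o oP] := choice tor.
pose b n := w n *+ n; pose ord n := o (b n).
have ord_gt0 n : (0 < ord n)%N by case: (oP (b n)).
have b_ord n : b n *+ ord n = 0 by case: (oP (b n)).
have b_mulrn n : exists v, b n = v *+ n by exists (w n).
pose N := moduli ord; pose y := moduli_sum b ord.
have [z [_ clz]] : [set: G] `&` cluster (y @ \oo) !=set0 by apply: cG; exact: filterT.
have z_coset k : exists v, z = y k + v *+ N k.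
  have : [set y k + v *+ N k | v in [set: G]] z.
    apply: cluster_sub_closed clz; last exact: closed_coset_mulrn_image.
    apply: filterS (nbhs_infty_ge k) => j /= kj.
    by have [v yjE] := moduli_sum_tail ord b_mulrn kj; exists v => //; rewrite /y yjE.
  by case=> v _ <-; exists v.
have [k_gt0 zk0] := oP z; set k := o z in k_gt0 zk0.
have zN j : (k <= j)%N -> z *+ N j = 0.
  move=> kj; have := dvdn_moduliS ord k.-1; rewrite prednK // => /dvdn_trans.
  move=> /(_ _ (moduli_dvd ord kj)) /dvdnP [c def_Nj].
  by rewrite /N def_Nj mulnC mulrnA zk0 mul0rn.
have [v def_z] := z_coset k.+1.
have z_eq : z = y k.+1.
  apply/eqP; rewrite -subr_eq0; apply/eqP; apply: (@divisible_torsion_eq0 _ v (N k.+1)).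
    by rewrite def_z addrAC subrr add0r.
  by rewrite mulrnBl zN // (moduli_sum_mulrn b_ord) subrr.
have := wP (N k) (moduli_gt0 ord_gt0 k); rewrite -/(b _).
suff : z *+ N k = b (N k) *+ N k by rewrite zN // => <-; rewrite eqxx.
by rewrite z_eq /y moduli_sumS mulrnDl (moduli_sum_mulrn b_ord) add0r.
Qed.

Lemma squarefree_exponent_of_torsion : squarefree_finite_exponent G.
Proof.
have exP : exists n, (0 < n)%N && `[< forall x, x *+ n = 0 >].
  by have [n n_gt0 nG] := exists_annihilator; exists n; rewrite n_gt0 asboolT.
case: (ex_minnP exP) => e /andP [e_gt0 /asboolP eG] e_min.
have e_le n : (0 < n)%N -> (forall x, x *+ n = 0) -> (e <= n)%N.
  by move=> n_gt0 nG; apply: e_min; rewrite n_gt0 asboolT.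
exists e; split => // p p_pr; apply/negP => /dvdnP [c def_e].
have c_gt0 : (0 < c)%N by move: e_gt0; rewrite def_e muln_gt0 => /andP [].
have p_gt1 := prime_gt1 p_pr.
have : (e <= c * p)%N.
  apply: e_le => [|x]; first by rewrite muln_gt0 c_gt0 ltnW.
  apply: (@divisible_torsion_eq0 _ (x *+ c) p); first by rewrite mulrnA.
  by rewrite -mulrnA -mulnA -def_e eG.
by rewrite def_e mulnA leqNgt ltn_Pmulr // muln_gt0 c_gt0 ltnW.
Qed.

End TorsionWithClosedComplements.

Theorem proposition2p13 (G : topologicalZmodType) :
  profinite_C_group G ->
  (C_group G <-> torsion_group G) /\
  (torsion_group G <-> squarefree_finite_exponent G).
Proof.
move=> [[cG [hG td]] CP].
have closed_complement (H : set G) : is_subgroup H -> closed H ->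
    exists K, permutable_complement H K.
  by move=> sH cH; have [K [_ HK]] := CP H sH cH; exists K.
have torsion_of_exponent : squarefree_finite_exponent G -> torsion_group G.
  by move=> [e [[e_gt0 [eG _]] _]] x; exists e.
split; split.
- exact: torsion_of_C_group.
- by move/(squarefree_exponent_of_torsion hG cG closed_complement)/C_group_of_squarefree_exponent.
- exact: squarefree_exponent_of_torsion.
- exact: torsion_of_exponent.
Qed.
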